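(* Let $B$ be a connected bipartite graph with parts $X$ and $Y$, and let $B'$ be the graph obtained from $B$ by adding three new vertices $x,z,y$ forming a path $xzy$, and making $x$ adjacent to every vertex of $X$ and $y$ adjacent to every vertex of $Y$. Then for every positive integer $d$, $B$ has boxicity at most $d$ if and only if $B'$ belongs to $(d+1)$-CBU.
   Context: The boxicity of a graph is the minimum $b$ such that the graph is the intersection graph of axis-parallel boxes in $\mathbb{R}^b$. Let $e_1,\ldots,e_k$ be the standard basis of $\mathbb{R}^k$. For $k\ge 1$, a graph belongs to $k$-CBU if one can assign to each vertex an axis-parallel box (product of $k$ closed intervals of positive length) in $\mathbb{R}^k$ such that the boxes have pairwise disjoint interiors, two distinct vertices are adjacent iff their boxes intersect, and any two intersecting boxes intersect in a $(k-1)$-dimensional box orthogonal to $e_1$. *)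

From HB Require Import structures.
From mathcomp Require Import all_boot all_order all_algebra.
From mathcomp Require Import reals.
Set Implicit Arguments. Unset Strict Implicit. Unset Printing Implicit Defensive.
Import Order.TTheory GRing.Theory Num.Theory.
Local Open Scope ring_scope.

Definition simple_graph (V : finType) (e : rel V) : Prop :=
  symmetric e /\ irreflexive e.

Definition connected_graph (V : finType) (e : rel V) : Prop :=
  forall x y : V, connect e x y.

Definition bipartite_parts (V : finType) (e : rel V) (X Y : {set V}) : Prop :=
  X :&: Y = set0 /\ X :|: Y = setT /\
  forall u v, e u v -> (u \in X /\ v \in Y) \/ (u \in Y /\ v \in X).

(* The graph B' on V + 'I_3: inr 0 = x, inr 1 = z, inr 2 = y; path x z y,
   x adjacent to all of X, y adjacent to all of Y. *)
Definition extB (V : finType) (e : rel V) (X Y : {set V}) : rel (V + 'I_3) :=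
  fun a b =>
    match a, b with
    | inl u, inl v => e u v
    | inl u, inr j | inr j, inl u =>
        ((val j == 0)%N && (u \in X)) || ((val j == 2)%N && (u \in Y))
    | inr i, inr j =>
        ((val i == 1)%N && ((val j == 0)%N || (val j == 2)%N)) ||
        ((val j == 1)%N && ((val i == 0)%N || (val i == 2)%N))
    end.

(* Boxes in R^k: vertex v gets the box prod_i [l v i, u v i]. *)
Definition boxes_meet (R : realType) (V : finType) (k : nat)
    (l u : V -> 'I_k -> R) (v w : V) : Prop :=
  forall i : 'I_k, l v i <= u w i /\ l w i <= u v i.

Definition box_rep (R : realType) (V : finType) (e : rel V) (k : nat)
    (l u : V -> 'I_k -> R) : Prop :=
  (forall v i, l v i <= u v i) /\
  (forall v w, v != w -> (e v w <-> boxes_meet l u v w)).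

Definition boxicity_le (R : realType) (V : finType) (e : rel V) (d : nat) : Prop :=
  exists l u : V -> 'I_d -> R, box_rep e l u.

(* k-CBU: boxes with positive-length sides, pairwise disjoint interiors,
   adjacency iff intersection, and intersecting boxes meet in a
   (k-1)-dimensional box orthogonal to e_1 (coordinate 0): the intersection
   in coordinate 0 is a single point and has positive length in every other
   coordinate. *)
Definition in_CBU (R : realType) (V : finType) (e : rel V) (k : nat) : Prop :=
  exists l u : V -> 'I_k -> R,
    (forall v i, l v i < u v i) /\
    (forall v w, v != w ->
       exists i : 'I_k, u v i <= l w i \/ u w i <= l v i) /\
    (forall v w, v != w -> (e v w <-> boxes_meet l u v w)) /\
    (forall v w, v != w -> boxes_meet l u v w ->
       forall i : 'I_k,
         if (val i == 0)%N
         then Num.max (l v i) (l w i) = Num.min (u v i) (u w i)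
         else Num.max (l v i) (l w i) < Num.min (u v i) (u w i)).

From HB Require Import structures.
From mathcomp Require Import all_boot all_order all_algebra.
From mathcomp Require Import reals.
From mathcomp Require Import lra.
Set Implicit Arguments. Unset Strict Implicit. Unset Printing Implicit Defensive.
Import Order.TTheory GRing.Theory Num.Theory.
Local Open Scope ring_scope.

(* If B has a box representation in R^d, widen its boxes slightly so that they have sides of
   positive length and boxes that meet overlap properly, and put in front a new first coordinate
   in which the vertices of X, Y, x, z, y get the intervals [0,1], [1,2], [-1,0], [0,2], [2,3]:
   adjacent vertices of B' then touch exactly along a hyperplane orthogonal to e_1.
   Conversely, in a (d+1)-CBU representation of B' the first coordinates of adjacent vertices are
   intervals sharing an endpoint.  Since three intervals cannot pairwise share endpoints, the
   intervals of x and y do not; it follows that all X-intervals lie on the same side of the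
   interval of x, and then the connectivity of B forces the intervals of all vertices of B to
   meet pairwise.  So dropping the first coordinate leaves a box representation of B. *)

Section Intervals.
Variable R : realType.

Definition abut (l1 u1 l2 u2 : R) := l1 = u2 \/ u1 = l2.

Definition apart (l1 u1 l2 u2 : R) := u1 < l2 \/ u2 < l1.

Lemma abutC (l1 u1 l2 u2 : R) : abut l1 u1 l2 u2 -> abut l2 u2 l1 u1.
Proof. by case=> ->; [right | left]. Qed.

Lemma abutN (l1 u1 l2 u2 : R) : abut (- u1) (- l1) (- u2) (- l2) <-> abut l1 u1 l2 u2.
Proof. by split; case=> ?; [right | left | right | left]; lra. Qed.

Lemma apartC (l1 u1 l2 u2 : R) : apart l1 u1 l2 u2 -> apart l2 u2 l1 u1.
Proof. by case; [right | left]. Qed.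

Lemma max_eq_min_abut (l1 u1 l2 u2 : R) : l1 < u1 -> l2 < u2 ->
  Num.max l1 l2 = Num.min u1 u2 <-> abut l1 u1 l2 u2.
Proof.
move=> lt1 lt2; rewrite /abut maxEle minEle.
by case: (leP l1 l2) => ?; case: (leP u1 u2) => ? /=; split=> [? | [] ?]; lra.
Qed.

Lemma abut_no_triangle (l1 u1 l2 u2 l3 u3 : R) : l1 < u1 -> l2 < u2 -> l3 < u3 ->
  abut l1 u1 l2 u2 -> abut l2 u2 l3 u3 -> ~ abut l1 u1 l3 u3.
Proof. by move=> ? ? ? [] ? [] ? [] ?; lra. Qed.

End Intervals.

Section FiniteFamilies.
Variables (R : realType) (A : finType).

Lemma fin_pos_gap (g : A -> R) :
  exists2 eps : R, 0 < eps & forall a, 0 < g a -> eps < g a.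
Proof.
pose m := \big[Num.min/1]_(a | 0 < g a) g a.
have m_gt0 : 0 < m by apply: (big_ind (fun x => 0 < x)) => // x y; rewrite lt_min => ->.
exists (m / 2); first lra.
move=> a ga_gt0; have : m <= g a by apply: bigmin_le_cond.
lra.
Qed.

Lemma fin_bounded (f : A -> R) : exists2 M : R, 0 < M & forall a, - M < f a < M.
Proof.
exists (1 + \big[Num.max/0]_a `|f a|) => [|a].
  have : 0 <= \big[Num.max/0]_a `|f a| by apply: bigmax_ge_id.
  lra.
by rewrite -ltr_norml; have := le_bigmax 0 (fun a => `|f a|) a; lra.
Qed.

End FiniteFamilies.

Section ConnectedGraphs.
Variables (V : finType) (e : rel V).
Hypothesis e_conn : connected_graph e.

Lemma connected_edge_invariant (T : eqType) (f : V -> T) :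
  (forall v w, e v w -> f v = f w) -> forall v w, f v = f w.
Proof.
move=> f_edge v w; have /connectP[p vp ->] := e_conn v w.
by elim: p v vp => //= v' p IHp v /andP[/f_edge -> /IHp].
Qed.

Lemma connected_has_nbr (v w : V) : v != w -> exists v', e v v'.
Proof.
have /connectP[[/= _ vw | v' p /= /andP[vv' _] _]] := e_conn v w; last by exists v'.
by rewrite vw eqxx.
Qed.

Hypotheses (e_sym : symmetric e) (X : {set V})
  (e_bip : forall v w, e v w -> (w \in X) = (v \notin X)).

Lemma bipartite_edge_invariant (T : eqType) (f : V -> T) :
  (forall v w, v \in X -> e v w -> f v = f w) -> forall v w, f v = f w.
Proof.
move=> fX; apply: connected_edge_invariant => v w vw.
case vX: (v \in X); first exact: fX.
by apply/esym/fX; [rewrite (e_bip vw) vX | rewrite e_sym].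
Qed.

Lemma bipartite_nbr_invariant (P : pred V) :
  (forall v v' w, v \in X -> v' \in X -> e v w -> e v' w -> P v = P v') ->
  {in X &, forall v v', P v = P v'}.
Proof.
move=> P_nbr; pose q v := if v \in X then P v else [exists w, e v w && P w].
suff q_const v v' : q v = q v' by move=> v v' vX v'X; have := q_const v v'; rewrite /q vX v'X.
apply: bipartite_edge_invariant => {}v {}v' vX vv'.
have v'X : v' \notin X by rewrite (e_bip vv') vX.
rewrite /q vX (negbTE v'X); apply/idP/existsP => [Pv | [w /andP[v'w Pw]]].
  by exists v; rewrite e_sym vv'.
by rewrite (P_nbr v w v') // ?(e_bip v'w) // e_sym.
Qed.

End ConnectedGraphs.

Section Boxes.
Variable R : realType.

(* Widening every interval by a third of the smallest positive gap makes overlaps proper and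
   keeps disjoint intervals apart. *)
Lemma box_rep_fatten (V : finType) (e : rel V) (d : nat) (l u : V -> 'I_d -> R) :
  box_rep e l u ->
  exists l' u' : V -> 'I_d -> R,
  [/\ forall v j, l' v j < u' v j,
      forall v w, v != w -> e v w -> forall j, l' v j < u' w j /\ l' w j < u' v j
    & forall v w, v != w -> ~~ e v w ->
        exists j, apart (l' v j) (u' v j) (l' w j) (u' w j)].
Proof.
case=> le_lu meetP.
have [eps eps_gt0 gap] := fin_pos_gap (fun t : V * V * 'I_d => l t.1.1 t.2 - u t.1.2 t.2).
exists (fun v j => l v j - eps / 3), (fun v j => u v j + eps / 3); split.
- by move=> v j; have := le_lu v j; lra.
- by move=> v w vw /(meetP v w vw) meet j; have [] := meet j; lra.
- move=> v w vw /negP nevw.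
  case: (boolP [forall j, (l v j <= u w j) && (l w j <= u v j)]) => [/forallP meet|].
    by case: nevw; apply/(meetP v w vw) => j; apply/andP.
  case/forallPn=> j; rewrite negb_and -!ltNge => /orP[] lt; exists j.
    by right; have /= := gap (v, w, j); rewrite subr_gt0 => /(_ lt); lra.
  by left; have /= := gap (w, v, j); rewrite subr_gt0 => /(_ lt); lra.
Qed.

Definition cons_coord (T : Type) (k : nat) (c : T) (f : 'I_k -> T) (i : 'I_k.+1) : T :=
  if unlift ord0 i is Some j then f j else c.

Lemma cons_coord0 (T : Type) (k : nat) (c : T) (f : 'I_k -> T) : cons_coord c f ord0 = c.
Proof. by rewrite /cons_coord unlift_none. Qed.

Lemma cons_coordS (T : Type) (k : nat) (c : T) (f : 'I_k -> T) (j : 'I_k) :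
  cons_coord c f (lift ord0 j) = f j.
Proof. by rewrite /cons_coord liftK. Qed.

Lemma boxes_meet_cons (A : finType) (k : nat) (l0 u0 : A -> R) (l u : A -> 'I_k -> R) a b :
  boxes_meet (fun a => cons_coord (l0 a) (l a)) (fun a => cons_coord (u0 a) (u a)) a b <->
  (l0 a <= u0 b /\ l0 b <= u0 a) /\ boxes_meet l u a b.
Proof.
split=> [m | [m0 m] i].
  split=> [|j]; first by have := m ord0; rewrite !cons_coord0.
  by have := m (lift ord0 j); rewrite !cons_coordS.
by case: (unliftP ord0 i) => [j|] ->; rewrite ?cons_coordS ?cons_coord0.
Qed.

Definition cbu_pair (A : Type) (k : nat) (l0 u0 : A -> R) (l u : A -> 'I_k -> R)
    (adj : bool) (a b : A) : Prop :=
  if adj then abut (l0 a) (u0 a) (l0 b) (u0 b) /\ (forall j, l a j < u b j /\ l b j < u a j)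
  else apart (l0 a) (u0 a) (l0 b) (u0 b) \/ exists j, apart (l a j) (u a j) (l b j) (u b j).

Lemma cbu_pairC (A : Type) (k : nat) (l0 u0 : A -> R) (l u : A -> 'I_k -> R) adj a b :
  cbu_pair l0 u0 l u adj a b -> cbu_pair l0 u0 l u adj b a.
Proof.
case: adj => [[/abutC ab ov] | [/apartC ab | [j /apartC ab]]]; [split | left | right] => //.
- by move=> j; have [] := ov j.
- by exists j.
Qed.

Lemma in_CBU_cons (A : finType) (E : rel A) (k : nat) (l0 u0 : A -> R)
    (l u : A -> 'I_k -> R) :
  (forall a, l0 a < u0 a) -> (forall a j, l a j < u a j) ->
  (forall a b, a != b -> cbu_pair l0 u0 l u (E a b) a b) ->
  in_CBU R E k.+1.
Proof.
move=> lt0 lt pairs.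
pose bl a := cons_coord (l0 a) (l a); pose bu a := cons_coord (u0 a) (u a).
have meetP a b : a != b -> E a b <-> boxes_meet bl bu a b.
  move=> ab; rewrite boxes_meet_cons; have := pairs a b ab; rewrite /cbu_pair.
  have := lt0 a; have := lt0 b.
  case: (E a b) => [lt0b lt0a [ab0 ov] | lt0b lt0a nmeet].
    split=> // _; split=> [|j]; first by case: ab0; lra.
    by have [] := ov j; split; exact: ltW.
  split=> // -[[m1 m2] m].
  by case: nmeet => [| [j]]; rewrite /apart; [|have [] := m j]; case; lra.
exists bl, bu; split; [|split; [|split]].
- move=> a i; rewrite /bl /bu.
  by case: (unliftP ord0 i) => [j|] ->; rewrite ?cons_coordS ?cons_coord0.
- move=> a b ab; have := pairs a b ab; rewrite /cbu_pair.
  case: (E a b) => [[ab0 _] | [ab0 | [j abj]]].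
  + by exists ord0; rewrite /bl /bu !cons_coord0; case: ab0 => ->; [right | left].
  + by exists ord0; rewrite /bl /bu !cons_coord0; case: ab0 => ?; [left | right]; exact: ltW.
  + exists (lift ord0 j); rewrite /bl /bu !cons_coordS.
    by case: abj => ?; [left | right]; exact: ltW.
- exact: meetP.
- move=> a b ab /(meetP a b ab) Eab; have := pairs a b ab; rewrite Eab => -[ab0 ov].
  move=> i; rewrite /bl /bu; case: (unliftP ord0 i) => [j|] ->.
    rewrite !cons_coordS /= gt_max !lt_min.
    by have [? ?] := ov j; rewrite !lt ?andbT; apply/andP; split.
  by rewrite /= !cons_coord0; apply/max_eq_min_abut.
Qed.

End Boxes.

Section AbuttingIntervals.
Variables (R : realType) (V : finType) (e : rel V) (X : {set V}).
Hypotheses (e_sym : symmetric e) (e_conn : connected_graph e)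
  (e_bip : forall v w, e v w -> (w \in X) = (v \notin X)).

(* A Y-interval abutting X-intervals on both sides of x would coincide with x, and x does not
   abut y. *)
Lemma abut_side_invariant (L U : V -> R) (lx ux ly uy : R) :
  (forall v, L v < U v) -> lx < ux -> ~ abut lx ux ly uy ->
  (forall v, v \in X -> abut (L v) (U v) lx ux) ->
  (forall v, v \notin X -> abut (L v) (U v) ly uy) ->
  (forall v w, e v w -> abut (L v) (U v) (L w) (U w)) ->
  {in X &, forall v v', (L v == ux) = (L v' == ux)}.
Proof.
move=> ltLU ltx nxy abX abY abE.
apply: (bipartite_nbr_invariant e_conn e_sym e_bip) => v v' w vX v'X vw v'w.
have wX : w \notin X by rewrite (e_bip vw) vX.
suff side v1 v2 : v1 \in X -> v2 \in X -> e v1 w -> e v2 w -> L v1 = ux -> L v2 = ux.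
  case: (eqVneq (L v) ux) => [Lv | Lv]; first by rewrite (side v v') ?eqxx.
  case: (eqVneq (L v') ux) => // Lv'.
  by move: Lv; rewrite (side v' v) ?eqxx.
move=> v1X v2X v1w v2w Lv1; case: (abX _ v2X) => // Uv2.
have [Lw Uw] : L w = lx /\ U w = ux.
  have := ltLU v1; have := ltLU v2; have := ltLU w.
  by case: (abE _ _ v1w) => ?; case: (abE _ _ v2w) => ?; split; lra.
by case: nxy; have := abY _ wX; rewrite Lw Uw.
Qed.

(* Either some Y-interval ends at ux, and then all of them do, so that ux is a common point;
   or none does, and then every edge glues the right end of its X-interval to the left end of
   its Y-interval, so that by connectivity all these ends are one common point. *)
Lemma abutting_intervals_meet_right (L U : V -> R) (ux ly uy : R) :
  (forall v, L v < U v) -> ly < uy -> ux != ly -> {in X, forall v, L v = ux} ->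
  (forall v, v \notin X -> abut (L v) (U v) ly uy) ->
  (forall v w, e v w -> abut (L v) (U v) (L w) (U w)) ->
  forall v w, L v <= U w.
Proof.
move=> ltLU lty ux_ly Xright abY abE.
case: (boolP [exists w in ~: X, U w == ux]) => [|/exists_inPn Yleft].
  case/exists_inP=> w0; rewrite inE => w0X /eqP Uw0.
  have Lw0 : L w0 = uy by case: (abY w0 w0X) => // Uw0'; move: ux_ly; rewrite -Uw0 Uw0' eqxx.
  have Yright : {in ~: X, forall w, U w = ux}.
    move=> w; rewrite inE => wX; case: (eqVneq (U w) ux) => // Uw.
    have ww0 : w != w0 by apply: contraNneq Uw => ->; rewrite Uw0.
    have [v wv] := connected_has_nbr e_conn ww0.
    have vX : v \in X by rewrite (e_bip wv).
    have := ltLU v; have := ltLU w; have := ltLU w0; have := Xright v vX.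
    case: (abE w v wv) => [Lw | Uw']; last by move: Uw; rewrite Uw' Xright ?eqxx.
    by case: (abY w wX) => ?; lra.
  have common a : L a <= ux /\ ux <= U a.
    have := ltLU a; case aX: (a \in X); first by rewrite Xright // => ?; split; lra.
    by rewrite Yright ?inE ?aX // => ?; split; lra.
  by move=> v w; have [? _] := common v; have [_ ?] := common w; lra.
pose f a := if a \in X then U a else L a.
have f_const v w : f v = f w.
  apply: (bipartite_edge_invariant e_conn e_sym e_bip) => {v w} v w vX vw.
  have wX : w \notin X by rewrite (e_bip vw) vX.
  rewrite /f vX (negbTE wX); case: (abE v w vw) => // Lv.
  by move: (Yleft w); rewrite inE wX -Lv Xright // eqxx => /(_ isT).
move=> v w; have := f_const v w; have := ltLU v; have := ltLU w; rewrite /f.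
by case: (v \in X); case: (w \in X) => ? ? ?; lra.
Qed.

(* Reflecting the line, we may assume that all X-intervals start at the right end of x. *)
Lemma abutting_intervals_meet (L U : V -> R) (lx ux ly uy : R) :
  (forall v, L v < U v) -> lx < ux -> ly < uy -> ~ abut lx ux ly uy ->
  (forall v, v \in X -> abut (L v) (U v) lx ux) ->
  (forall v, v \notin X -> abut (L v) (U v) ly uy) ->
  (forall v w, e v w -> abut (L v) (U v) (L w) (U w)) ->
  forall v w, L v <= U w.
Proof.
move=> ltLU ltx lty nxy abX abY abE.
case: (boolP [exists v in X, L v == ux]) => [|/exists_inPn Xleft].
  case/exists_inP=> v0 v0X /eqP Lv0.
  apply: (abutting_intervals_meet_right (ux := ux) ltLU lty _ _ abY abE).
    by apply/eqP => ux_ly; apply: nxy; right.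
  move=> v vX; apply/eqP.
  by rewrite (abut_side_invariant ltLU ltx nxy abX abY abE vX v0X) Lv0.
move=> v w; rewrite -lerN2.
apply: (@abutting_intervals_meet_right (fun a => - U a) (fun a => - L a) (- lx) (- uy) (- ly)).
- by move=> a; rewrite ltrN2.
- by rewrite ltrN2.
- by rewrite eqr_opp; apply/eqP => lx_uy; apply: nxy; left.
- by move=> a aX; case: (abX a aX) => [/eqP La | ->]; first by move: (Xleft a aX); rewrite La.
- by move=> a aX; rewrite abutN; exact: abY.
- by move=> a b ab; rewrite abutN; exact: abE.
Qed.

End AbuttingIntervals.

Lemma bipartite_partsE (V : finType) (e : rel V) (X Y : {set V}) :
  bipartite_parts e X Y -> Y = ~: X /\ forall v w, e v w -> (w \in X) = (v \notin X).
Proof.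
case=> XY0 [XYT bip]; have YE : Y = ~: X.
  apply/setP=> v; move/setP/(_ v): XY0; move/setP/(_ v): XYT.
  by rewrite !inE; case: (v \in X); case: (v \in Y).
by split=> // v w /bip; rewrite YE !inE; case: (v \in X); case: (w \in X); case=> -[].
Qed.

Lemma extB_irr (V : finType) (e : rel V) (X Y : {set V}) :
  irreflexive e -> irreflexive (extB e X Y).
Proof. by move=> irr [v | [[|[|[|k]]] ?]] //=; exact: irr. Qed.

Section ExtBoxes.
Variables (R : realType) (V : finType) (e : rel V) (X : {set V}) (d : nat) (j0 : 'I_d).
Variables (l u : V -> 'I_d -> R) (M : R).
Hypotheses (e_bip : forall v w, e v w -> (w \in X) = (v \notin X))
  (lt_lu : forall v j, l v j < u v j) (M_gt0 : 0 < M)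
  (inM : forall v j, - M < l v j /\ u v j < M)
  (meet_lu : forall v w, v != w -> e v w -> forall j, l v j < u w j /\ l w j < u v j)
  (apart_lu : forall v w, v != w -> ~~ e v w ->
     exists j, apart (l v j) (u v j) (l w j) (u w j)).

(* In the other
   coordinates x, y and z span [-M, M+1], which contains every box of B, except that z is
   moved to [M, M+1] in coordinate j0 to separate it from B. *)
Definition extB_l0 (a : V + 'I_3) : R :=
  match a with inl v => if v \in X then 0 else 1 | inr k => [:: -1; 0; 2]`_k end.

Definition extB_u0 (a : V + 'I_3) : R :=
  match a with inl v => if v \in X then 1 else 2 | inr k => [:: 0; 2; 3]`_k end.

Definition extB_l (a : V + 'I_3) (j : 'I_d) : R :=
  match a with
  | inl v => l v j
  | inr k => if (k == 1 :> nat) && (j == j0) then M else - M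
  end.

Definition extB_u (a : V + 'I_3) (j : 'I_d) : R :=
  match a with inl v => u v j | inr _ => M + 1 end.

Let pairE := cbu_pair extB_l0 extB_u0 extB_l extB_u.

Lemma extB_l0_lt a : extB_l0 a < extB_u0 a.
Proof.
by rewrite /extB_l0 /extB_u0; case: a => [v | [[|[|[|?]]] ?]] //=; [case: ifP => _ | |]; lra.
Qed.

Lemma extB_l_lt a j : extB_l a j < extB_u a j.
Proof. by case: a => [v | k] /=; [exact: lt_lu | have := M_gt0; case: ifP; lra]. Qed.

Lemma extB_pair_inl v w : v != w -> pairE (e v w) (inl v) (inl w).
Proof.
move=> vw; rewrite /pairE /cbu_pair /=.
case evw: (e v w); last by right; exact: apart_lu vw (negbT evw).
split; last exact: meet_lu vw evw.
by rewrite /abut /extB_l0 /extB_u0 (e_bip evw); case: (v \in X) => /=; [right | left].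
Qed.

Lemma extB_pair_inl_inr v k : pairE (extB e X (~: X) (inl v) (inr k)) (inl v) (inr k).
Proof.
have [lt_v inM_v] := (lt_lu v, inM v).
rewrite /pairE /cbu_pair /extB_l0 /extB_u0 /extB_l /extB_u /apart /abut.
case: k => [[|[|[|?]]] ?] //=; rewrite ?orbF ?in_setC.
- case: (v \in X) => /=; last by left; right; lra.
  by split=> [|j]; [left | have [? ?] := inM_v j; have := lt_v j; split; lra].
- by right; exists j0; rewrite eqxx; left; have [? ?] := inM_v j0; lra.
- case: (v \in X) => /=; first by left; left; lra.
  by split=> [|j]; [right | have [? ?] := inM_v j; have := lt_v j; split; lra].
Qed.

Lemma extB_pair_inr (k k' : 'I_3) : (k < k')%N ->
  pairE (extB e X (~: X) (inr k) (inr k')) (inr k) (inr k').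
Proof.
have := M_gt0; rewrite /pairE /cbu_pair /extB_l0 /extB_u0 /extB_l /extB_u /apart /abut.
case: k k' => [[|[|[|?]]] ?] [[|[|[|?]]] ?] //= ? _.
- by split=> [|j]; [right | case: ifP; split; lra].
- by left; lra.
- by split=> [|j]; [right | case: ifP; split; lra].
Qed.

Lemma extB_pair a b : a != b -> pairE (extB e X (~: X) a b) a b.
Proof.
case: a b => [v | k] [w | k'] ab.
- by apply: extB_pair_inl; apply: contraNneq ab => ->.
- exact: extB_pair_inl_inr.
- exact: cbu_pairC (extB_pair_inl_inr w k).
- case: (ltngtP k k') => kk'; first exact: extB_pair_inr.
    by have := cbu_pairC (extB_pair_inr kk'); rewrite /= orbC.
  by move: ab; rewrite (val_inj kk') eqxx.
Qed.

End ExtBoxes.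

Lemma in_CBU_extB (R : realType) (V : finType) (e : rel V) (X : {set V}) (d : nat) :
  (0 < d)%N -> (forall v w, e v w -> (w \in X) = (v \notin X)) ->
  boxicity_le R e d -> in_CBU R (extB e X (~: X)) d.+1.
Proof.
move=> d_gt0 e_bip [l [u /box_rep_fatten[l' [u' [lt' meet' apart']]]]].
have [M1 M1_gt0 bnd_l] := fin_bounded (fun t : V * 'I_d => l' t.1 t.2).
have [M2 M2_gt0 bnd_u] := fin_bounded (fun t : V * 'I_d => u' t.1 t.2).
pose M := M1 + M2.
have M_gt0 : 0 < M by rewrite /M; lra.
have inM v j : - M < l' v j /\ u' v j < M.
  by have /andP[? ?] := bnd_l (v, j); have /andP[? ?] := bnd_u (v, j); rewrite /M; split; lra.
pose j0 := Ordinal d_gt0.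
apply: (in_CBU_cons (l0 := extB_l0 R X) (u0 := extB_u0 R X)
                    (l := extB_l j0 l' M) (u := extB_u u' M)).
- exact: extB_l0_lt.
- exact: extB_l_lt.
- exact: extB_pair e_bip lt' M_gt0 inM meet' apart'.
Qed.

Lemma boxicity_of_in_CBU (R : realType) (V : finType) (e : rel V) (X : {set V}) (d : nat) :
  symmetric e -> irreflexive e -> connected_graph e ->
  (forall v w, e v w -> (w \in X) = (v \notin X)) ->
  in_CBU R (extB e X (~: X)) d.+1 -> boxicity_le R e d.
Proof.
move=> e_sym e_irr e_conn e_bip [l [u [lt_lu [_ [meetP contact]]]]].
pose L a := l a ord0; pose U a := u a ord0.
have ltLU a : L a < U a by exact: lt_lu.
have abutE a b : extB e X (~: X) a b -> abut (L a) (U a) (L b) (U b).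
  move=> ab; have a_b : a != b by apply: contraTneq ab => ->; rewrite extB_irr.
  by apply/max_eq_min_abut => //; exact: contact a b a_b ((meetP a b a_b).1 ab) ord0.
pose x : V + 'I_3 := inr (@Ordinal 3 0 isT).
pose z : V + 'I_3 := inr (@Ordinal 3 1 isT).
pose y : V + 'I_3 := inr (@Ordinal 3 2 isT).
have nxy : ~ abut (L x) (U x) (L y) (U y).
  by apply: (abut_no_triangle (ltLU x) (ltLU z) (ltLU y)); [apply/abutC|]; exact: abutE.
have meet0 : forall v w, L (inl v) <= U (inl w).
  apply: (abutting_intervals_meet e_sym e_conn e_bip _ (ltLU x) (ltLU y) nxy).
  - by move=> v; exact: ltLU.
  - by move=> v vX; apply: abutE; rewrite /= vX.
  - by move=> v vX; apply: abutE; rewrite /= inE vX.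
  - by move=> v w; exact: (abutE (inl v) (inl w)).
exists (fun v j => l (inl v) (lift ord0 j)), (fun v j => u (inl v) (lift ord0 j)); split.
  by move=> v j; exact: ltW.
move=> v w vw; have vw' : inl v != inl w :> V + 'I_3 by apply: contraNneq vw => -[->].
rewrite -[e v w]/(extB e X (~: X) (inl v) (inl w)) (meetP _ _ vw').
split=> [meet j | meet i]; first exact: meet.
by case: (unliftP ord0 i) => [j|] ->; [exact: meet | split; exact: meet0].
Qed.

Theorem mainTheorem8 (R : realType) (V : finType) (e : rel V) (X Y : {set V}) :
  simple_graph e -> connected_graph e -> bipartite_parts e X Y ->
  forall d : nat, (0 < d)%N ->
    (boxicity_le R e d <-> in_CBU R (extB e X Y) d.+1).
Proof.
move=> [e_sym e_irr] e_conn /bipartite_partsE[-> e_bip] d d_gt0; split.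
  exact: in_CBU_extB.
exact: boxicity_of_in_CBU.
Qed.
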